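(* Let $A$ be a bounded set in a Banach space $X$. Then $\gamma_0(A)\le\operatorname{bs}(A)$.
   Context: $\gamma_0(A)=\sup\{|\lim_m\lim_n x_m^*(x_n)| : (x_m^* )\text{ a sequence in }B_{X^*}\text{ weak}^*\text{ converging to }0,\ (x_n)\text{ a sequence in }A,\text{ and all the involved limits exist}\}$, where $B_{X^*}$ is the closed unit ball of $X^*$. For a bounded sequence $(x_k)$: $\operatorname{ca}(x_k)=\inf_{n}\sup\{\|x_k-x_l\|: k,l\ge n\}$, $\operatorname{cca}(x_k)=\operatorname{ca}(\frac1k\sum_{i=1}^k x_i)$, $\widetilde{\operatorname{cca}}(x_k)=\inf\{\operatorname{cca}(x_{k_n}) : (x_{k_n})\text{ a subsequence of }(x_k)\}$, and $\operatorname{bs}(A)=\sup\{\widetilde{\operatorname{cca}}(x_k): (x_k)\subset A\}$. *)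

From HB Require Import structures.
From mathcomp Require Import all_boot all_order all_algebra.
From mathcomp Require Import all_classical all_reals all_analysis.
Set Implicit Arguments. Unset Strict Implicit. Unset Printing Implicit Defensive.
Import Order.TTheory GRing.Theory Num.Theory.
Import numFieldNormedType.Exports.
Local Open Scope classical_set_scope.
Local Open Scope ring_scope.

Section Defs.
Context {R : realType} {X : normedModType R}.

(* f is an element of the closed unit ball B_{X^*} of the (real) dual:
   a linear functional with |f x| <= ||x|| (hence continuous, norm <= 1). *)
Definition in_dual_ball (f : X -> R) : Prop :=
  (forall (a : R) (u v : X), f (a *: u + v) = a * f u + f v) /\
  (forall x : X, `|f x| <= `|x|).

Definition gamma0 (A : set X) : \bar R :=
  ereal_sup [set r : \bar R | exists (F : nat -> X -> R) (x : nat -> X),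
    [/\ (forall m, in_dual_ball (F m)),
        (forall y : X, (fun m => F m y) @ \oo --> (0 : R)),
        (forall n, A (x n)),
      (forall m, cvgn (fun n => F m (x n))) &
      cvgn (fun m => limn (fun n => F m (x n)))] /\
        r = (`| limn (fun m => limn (fun n => F m (x n))) |)%:E].

Definition ca (u : nat -> X) : \bar R :=
  ereal_inf [set s : \bar R | exists n : nat,
    s = ereal_sup [set t : \bar R | exists k l : nat,
          [/\ (n <= k)%N, (n <= l)%N & t = (`| u k - u l |)%:E]]].

(* Cesaro means: cesaro u k = (1/(k+1)) sum_{i=0}^{k} u i
   (the paper's (1/k) sum_{i=1}^k x_i with 0-based indexing). *)
Definition cesaro (u : nat -> X) (k : nat) : X :=
  (k.+1%:R)^-1 *: \sum_(i < k.+1) u i.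

Definition cca (u : nat -> X) : \bar R := ca (cesaro u).

Definition cca_tilde (u : nat -> X) : \bar R :=
  ereal_inf [set s : \bar R | exists phi : nat -> nat,
    (forall n, (phi n < phi n.+1)%N) /\ s = cca (u \o phi)].

Definition bs (A : set X) : \bar R :=
  ereal_sup [set s : \bar R | exists u : nat -> X,
    (forall k, A (u k)) /\ s = cca_tilde u].

End Defs.

(* Take a witness of gamma_0(A): F_m in the dual ball, weak* null, and x_n in A with
   a_m := lim_n F_m x_n -> L.  Along any subsequence of (x_n) the Cesaro means c_k still
   satisfy F_m c_k -> a_m.  Given n, pick m with a_m near L and F_m c_n near 0, then k >= n
   with F_m c_k near a_m; as ||F_m|| <= 1, ||c_k - c_n|| >= |F_m c_k - F_m c_n| is nearly |L|.
   So every tail diameter of every such Cesaro sequence is at least |L|, whence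
   |L| <= cca~(x) <= bs(A). *)
From Pilot Require Import Defs.
From HB Require Import structures.
From mathcomp Require Import all_boot all_order all_algebra.
From mathcomp Require Import all_classical all_reals all_analysis.
From mathcomp Require Import ring lra.
Import Order.TTheory GRing.Theory Num.Theory.
Import numFieldNormedType.Exports.
Local Open Scope classical_set_scope.
Local Open Scope ring_scope.

Lemma increasing_cvgny (phi : nat -> nat) :
  (forall n, (phi n < phi n.+1)%N) -> phi @ \oo --> \oo.
Proof.
move=> phiS; have phi_ge i : (i <= phi i)%N.
  by elim: i => [|i IH] //; exact: leq_ltn_trans IH (phiS i).
by apply/cvgnyPge => N; near=> n; apply: leq_trans (phi_ge n); near: n; exists N.
Unshelve. all: end_near.
Qed.

Lemma cvgn_subseq {T : topologicalType} {u : nat -> T} {l : T} {phi : nat -> nat} :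
  (forall n, (phi n < phi n.+1)%N) -> u @ \oo --> l -> (u \o phi) @ \oo --> l.
Proof. by move=> /increasing_cvgny phioo ul; exact: cvg_comp phioo ul. Qed.

Section DualBall.
Context {R : realType} {X : normedModType R} {f : X -> R} (hf : in_dual_ball f).

Lemma dual_ball0 : f 0 = 0.
Proof. by apply/eqP; rewrite -normr_le0 -(normr0 X); exact: hf.2. Qed.

Lemma dual_ballD u v : f (u + v) = f u + f v.
Proof. by have := hf.1 1 u v; rewrite scale1r mul1r. Qed.

Lemma dual_ballZ a u : f (a *: u) = a * f u.
Proof. by have := hf.1 a u 0; rewrite !addr0 dual_ball0 addr0. Qed.

Lemma dual_ballB u v : f (u - v) = f u - f v.
Proof. by rewrite dual_ballD -scaleN1r dual_ballZ mulN1r. Qed.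

Lemma dual_ball_dist u v : `|f u - f v| <= `|u - v|.
Proof. by rewrite -dual_ballB; exact: hf.2. Qed.

(* [cesaro] alone would denote the Cesaro lemma of sequences.v. *)
Lemma dual_ball_cesaro (y : nat -> X) k :
  f (Defs.cesaro y k) = arithmetic_mean (f \o y) k.
Proof.
rewrite /Defs.cesaro /arithmetic_mean /series /= dual_ballZ.
by rewrite (big_morph f dual_ballD dual_ball0) big_mkord.
Qed.

Lemma dual_ball_cesaro_subseq_cvg {x : nat -> X} {phi : nat -> nat} :
  (forall n, (phi n < phi n.+1)%N) -> cvgn (fun n => f (x n)) ->
  (fun k => f (Defs.cesaro (x \o phi) k)) @ \oo --> limn (fun n => f (x n)).
Proof.
move=> phiS /(cvgn_subseq phiS) fx.
by under eq_fun do rewrite dual_ball_cesaro; exact: cesaro.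
Qed.

End DualBall.

Section TailDiameter.
Context {R : realType} {X : normedModType R}.

Definition tail_diam (c : nat -> X) (n : nat) : \bar R :=
  ereal_sup [set t : \bar R | exists k l : nat,
    [/\ (n <= k)%N, (n <= l)%N & t = (`| c k - c l |)%:E]].

Lemma ca_ge (c : nat -> X) (r : \bar R) :
  (forall n, (r <= tail_diam c n)%E) -> (r <= ca c)%E.
Proof. by move=> rc; apply: le_ereal_inf_tmp => _ [n ->]; exact: rc. Qed.

Lemma dual_lim_le_dist {F : nat -> X -> R} {c : nat -> X} {a : nat -> R} {L : R}
    (n : nat) (e : R) :
  (forall m, in_dual_ball (F m)) -> (forall y, (fun m => F m y) @ \oo --> 0) ->
  (forall m, (fun k => F m (c k)) @ \oo --> a m) -> a @ \oo --> L -> 0 < e ->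
  exists k, (n <= k)%N /\ `|L| < `|c k - c n| + e.
Proof.
move=> hF F0 Fc /cvgrPdist_lt aL e0; have e3 : 0 < e / 3 by lra.
near \oo => m.
have /cvgrPdist_lt/(_ _ e3)[K _ HK] := Fc m.
exists (maxn n K); split; first exact: leq_maxl.
have hL : `|L - a m| < e / 3 by near: m; exact: aL.
have hn : `|F m (c n)| < e / 3.
  by rewrite -normrN -sub0r; near: m; exact: (cvgrPdist_lt _ _).1 (F0 (c n)) _ e3.
have hk := HK _ (leq_maxr n K); rewrite /= in hk.
have hd := dual_ball_dist (hF m) (c (maxn n K)) (c n).
move: hk hd; set p := F m (c _); set q := F m (c n) => hk hd.
have : `|L| <= `|L - a m| + `|a m - p| + `|p - q| + `|q|.
  have {1}-> : L = (L - a m) + (a m - p) + (p - q) + q by ring.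
  apply: (le_trans (ler_normD _ _)); rewrite lerD2r.
  apply: (le_trans (ler_normD _ _)); rewrite lerD2r.
  exact: ler_normD.
lra.
Unshelve. all: end_near.
Qed.

Lemma dual_lim_le_tail_diam {F : nat -> X -> R} {c : nat -> X} {a : nat -> R} {L : R}
    (n : nat) :
  (forall m, in_dual_ball (F m)) -> (forall y, (fun m => F m y) @ \oo --> 0) ->
  (forall m, (fun k => F m (c k)) @ \oo --> a m) -> a @ \oo --> L ->
  ((`|L|)%:E <= tail_diam c n)%E.
Proof.
move=> hF F0 Fc aL; apply/lee_subgt0Pr => e e0.
have [k [nk Lk]] := dual_lim_le_dist n e hF F0 Fc aL e0.
apply: le_ereal_sup_tmp; exists (`|c k - c n|)%:E; first by exists k, n.
by rewrite -EFinB lee_fin; lra.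
Qed.

End TailDiameter.

Theorem lemma3p5 (R : realType) (X : completeNormedModType R) (A : set X)
  (hA : exists M : R, forall x : X, A x -> `|x| <= M) :
  (gamma0 A <= bs A)%E.
Proof.
apply: ge_ereal_sup => _ [F [x [[hF F0 Ax Fx aL] ->]]].
apply: (@le_trans _ _ (cca_tilde x)); last by apply: ereal_sup_ubound; exists x.
apply: le_ereal_inf_tmp => _ [phi [phiS ->]].
have Fc m := dual_ball_cesaro_subseq_cvg (hF m) phiS (Fx m).
by apply: ca_ge => n; exact: dual_lim_le_tail_diam n hF F0 Fc aL.
Qed.
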